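(* Let $\mathcal{D}',\mathcal{D}''$ be two inputs of $\mathsf{SGDsub}$ that differ only in the user $Z_{1,1}$, run from the same initial point with the same parameters, step size $\eta$, and threshold $\varsigma=1/\tau$ in $\mathsf{RobustEst}$. Suppose $6\beta\eta B\le1$ and $(\mathcal{D}',\mathcal{D}'')$ is $(1/\tau)$-aligned. Then $|s_t(\mathcal{D}',\tau)-s_t(\mathcal{D}'',\tau)|\le 2$ for all $t\ge2$.
   Context: $\mathcal{X}\subset\mathbb{R}^d$ is an $\ell_\infty$-ball with Euclidean projection $\Pi_{\mathcal{X}}$. Each $f(\cdot;z)$ is convex, $\beta$-smooth ($\|\nabla^2 f(x;z)\|_\infty\le\beta$, $\|A\|_\infty=\max_i\sum_j|A_{ij}|$) with diagonally dominant Hessian ($|A_{ii}|\ge\sum_{j\ne i}|A_{ij}|$). Robust statistic: a coordinatewise map $(X_1,\dots,X_B)\mapsto X_{\mathrm{rs}}$ with (i) if more than $B/2$ of the $X_i$ lie in $B_\infty(X',\rho)$ then $X_{\mathrm{rs}}\in B_\infty(X',\rho)$; (ii) if $\|Y_i-X_i\|_\infty\le\Delta$ for all $i$ then $\|X_{\mathrm{rs}}-Y_{\mathrm{rs}}\|_\infty\le\Delta$; (iii) $(aX_i+b)_{\mathrm{rs}}=aX_{\mathrm{rs}}+b$. $\mathsf{RobustEst}(X_1,\dots,X_B;\varsigma)$: coordinatewise, output the projection of the mean $\bar x[j]$ onto $[X_{\mathrm{rs}}[j]-\varsigma,X_{\mathrm{rs}}[j]+\varsigma]$ if $|X_{\mathrm{rs}}[j]-\bar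 x[j]|\ge\varsigma$, else $\bar x[j]$. $\mathsf{SGDsub}$: users (sets of $m$ points) split into groups $\{Z_{i,t}\}_{t\in[T]}$, $i\in[B]$; $q_t(Z_{i,t})=\frac1m\sum_{z\in Z_{i,t}}\nabla f(x_{t-1};z)$, $g_{t-1}=\mathsf{RobustEst}(q_t(Z_{1,t}),\dots,q_t(Z_{B,t});\varsigma)$, $x_t=\Pi_{\mathcal{X}}(x_{t-1}-\eta g_{t-1})$. $s_t(\mathcal{D}',\tau)=\frac1B\sum_{i,j\in[B]}\exp(-\tau\|q_t(Z_{i,t})-q_t(Z_{j,t})\|_\infty)$, and $s_t(\mathcal{D}'',\tau)$ is the same with $q'_t$ computed along the trajectory $y_t$ of $\mathcal{D}''$. The pair is $\rho$-aligned if there are $X',Y'$ such that at least $2B/3$ of $q_1(Z_{i,1})$ lie in $B_\infty(X',\rho)$ and at least $2B/3$ of $q'_1(Z'_{i,1})$ lie in $B_\infty(Y',\rho)$. *)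

From HB Require Import structures.
From mathcomp Require Import all_boot all_order all_algebra.
From mathcomp Require Import all_classical all_reals all_analysis.
Set Implicit Arguments. Unset Strict Implicit. Unset Printing Implicit Defensive.
Import Order.TTheory GRing.Theory Num.Theory.
Import numFieldNormedType.Exports.
Local Open Scope ring_scope.

Section Defs.
Variables (R : realType) (d : nat).

Definition linf (v : 'rV[R]_d) : R := \big[Num.max/0]_(j < d) `|v 0 j|.

Definition mxinf (A : 'M[R]_d) : R :=
  \big[Num.max/0]_(i < d) \sum_(j < d) `|A i j|.

Definition diag_dominant (A : 'M[R]_d) : Prop :=
  forall i : 'I_d, \sum_(j < d | j != i) `|A i j| <= `|A i i|.

Definition in_linf_ball (c : 'rV[R]_d) (rho : R) (x : 'rV[R]_d) : Prop :=
  linf (x - c) <= rho.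

Definition sqdist2 (x y : 'rV[R]_d) : R := \sum_(j < d) (x 0 j - y 0 j) ^+ 2.

Definition is_euclid_proj_ball (c : 'rV[R]_d) (r : R) (Pi : 'rV[R]_d -> 'rV[R]_d)
  : Prop :=
  forall y, in_linf_ball c r (Pi y) /\
    forall x, in_linf_ball c r x -> sqdist2 y (Pi y) <= sqdist2 y x.

Definition convex_fun (f : 'rV[R]_d -> R) : Prop :=
  forall (x y : 'rV[R]_d) (l : R), 0 <= l <= 1 ->
    f (l *: x + (1 - l) *: y) <= l * f x + (1 - l) * f y.

Definition is_gradient (f : 'rV[R]_d -> R^o) (g : 'rV[R]_d -> 'rV[R]_d) : Prop :=
  forall x, differentiable f x /\
    forall v : 'rV[R]_d, ('d f x : 'rV[R]_d -> R^o) v = \sum_(j < d) g x 0 j * v 0 j.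

Definition is_hessian (g : 'rV[R]_d -> 'rV[R]_d) (H : 'rV[R]_d -> 'M[R]_d) : Prop :=
  forall x, differentiable g x /\
    forall v : 'rV[R]_d, ('d g x : 'rV[R]_d -> 'rV[R]_d) v = (H x *m v^T)^T.

Variable B : nat.

Definition coord_map (phi : ('I_B -> R) -> R) (X : 'I_B -> 'rV[R]_d) : 'rV[R]_d :=
  \row_j phi (fun i => X i 0 j).

Definition robust_stat (rs : ('I_B -> 'rV[R]_d) -> 'rV[R]_d) : Prop :=
  [/\ (forall (X : 'I_B -> 'rV[R]_d) (X' : 'rV[R]_d) (rho : R),
         (B < 2 * #|[set i : 'I_B | `[< in_linf_ball X' rho (X i) >]]|)%N ->
         in_linf_ball X' rho (rs X)),
      (forall (X Y : 'I_B -> 'rV[R]_d) (Delta : R),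
         (forall i, linf (Y i - X i) <= Delta) -> linf (rs X - rs Y) <= Delta) &
      (forall (X : 'I_B -> 'rV[R]_d) (a : R) (b : 'rV[R]_d),
         rs (fun i => a *: X i + b) = a *: rs X + b)].

Definition mean (X : 'I_B -> 'rV[R]_d) : 'rV[R]_d := B%:R^-1 *: \sum_(i < B) X i.

Definition clamp (lo hi a : R) : R := Num.max lo (Num.min hi a).

Definition robust_est (rs : ('I_B -> 'rV[R]_d) -> 'rV[R]_d)
  (X : 'I_B -> 'rV[R]_d) (vs : R) : 'rV[R]_d :=
  \row_j (let xr := rs X 0 j in let xb := mean X 0 j in
          if vs <= `|xr - xb| then clamp (xr - vs) (xr + vs) xb else xb).

Variables (Zt : Type) (m : nat).

Definition qgrad (gradf : Zt -> 'rV[R]_d -> 'rV[R]_d) (U : 'I_m -> Zt)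
  (x : 'rV[R]_d) : 'rV[R]_d := m%:R^-1 *: \sum_(k < m) gradf (U k) x.

(* D t i = the user Z_{i,t} (only t >= 1 is used) *)
Fixpoint sgd_traj (gradf : Zt -> 'rV[R]_d -> 'rV[R]_d)
  (rs : ('I_B -> 'rV[R]_d) -> 'rV[R]_d) (Pi : 'rV[R]_d -> 'rV[R]_d)
  (eta vs : R) (x0 : 'rV[R]_d) (D : nat -> 'I_B -> 'I_m -> Zt) (t : nat)
  : 'rV[R]_d :=
  match t with
  | 0 => x0
  | t'.+1 =>
      let x := sgd_traj gradf rs Pi eta vs x0 D t' in
      Pi (x - eta *: robust_est rs (fun i => qgrad gradf (D t'.+1 i) x) vs)
  end.

Definition s_stat (gradf : Zt -> 'rV[R]_d -> 'rV[R]_d)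
  (rs : ('I_B -> 'rV[R]_d) -> 'rV[R]_d) (Pi : 'rV[R]_d -> 'rV[R]_d)
  (eta vs : R) (x0 : 'rV[R]_d) (D : nat -> 'I_B -> 'I_m -> Zt) (tau : R) (t : nat)
  : R :=
  let x := sgd_traj gradf rs Pi eta vs x0 D t.-1 in
  B%:R^-1 * \sum_(i < B) \sum_(j < B)
     expR (- (tau * linf (qgrad gradf (D t i) x - qgrad gradf (D t j) x))).

(* rho-alignment of (D1, D2): both start at x0, so q_1 is evaluated at x0 *)
Definition aligned (gradf : Zt -> 'rV[R]_d -> 'rV[R]_d) (x0 : 'rV[R]_d)
  (D1 D2 : nat -> 'I_B -> 'I_m -> Zt) (rho : R) : Prop :=
  exists X' Y' : 'rV[R]_d,
    (2 * B <= 3 * #|[set i : 'I_B | `[< in_linf_ball X' rho (qgrad gradf (D1 1%N i) x0) >]]|)%N /\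
    (2 * B <= 3 * #|[set i : 'I_B | `[< in_linf_ball Y' rho (qgrad gradf (D2 1%N i) x0) >]]|)%N.

End Defs.

(* For t >= 2 both runs see the same users, so s_t(D', tau) and s_t(D'', tau) differ only
   through the points x_{t-1}, y_{t-1} at which the user gradients are evaluated.  The
   projection onto an l_inf ball acts coordinatewise as a clamp, and a diagonally dominant
   Hessian of norm at most beta with eta * beta <= 1 makes x - eta * grad f(x) nonexpansive
   in l_inf (mean value theorem row by row).  RobustEst is the mean clamped to a window of
   half-width 1/tau around an affine-equivariant, 1-Lipschitz statistic, so every SGD step
   is nonexpansive.  At the first step alignment (with B >= 4) provides a user, not the
   changed one, that is good for both runs; it pins both robust estimates within 6/tau of
   each other, hence |x_{t-1} - y_{t-1}| <= 6 eta / tau.  Each of the B^2 kernel terms of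
   s_t then moves by at most tau * 2 beta * 6 eta / tau, and s_t moves by at most
   12 beta eta B <= 2.  For B <= 3 it suffices that s_t always lies in [1, B]. *)

From HB Require Import structures.
From mathcomp Require Import all_boot all_order all_algebra.
From mathcomp Require Import all_classical all_reals all_analysis.
From mathcomp Require Import lra ring zify.
Import Order.TTheory GRing.Theory Num.Theory.
Import numFieldNormedType.Exports.
Set Implicit Arguments. Unset Strict Implicit. Unset Printing Implicit Defensive.
Local Open Scope ring_scope.

Lemma subrACA (V : zmodType) (a b c e : V) : (a - b) - (c - e) = (a - c) - (b - e).
Proof. by rewrite !opprB addrACA [RHS]addrACA [- c - b]addrC. Qed.

Section LinfNorm.
Variables (R : realType) (d : nat).
Implicit Types (v w : 'rV[R]_d) (H : 'M[R]_d).

Lemma ler_coord_norm v j : `|v 0 j| <= `|v|.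
Proof.
rewrite [leRHS]/Num.Def.normr /= mx_normrE.
exact: (le_bigmax _ _ (0, j)).
Qed.

Lemma coordB v w j : (v - w) 0 j = v 0 j - w 0 j.
Proof. by rewrite !mxE. Qed.

Lemma ler_coord_dist v w j : `|v 0 j - w 0 j| <= `|v - w|.
Proof. by rewrite -coordB ler_coord_norm. Qed.

Lemma rV_norm_le v (e : R) : 0 <= e -> (forall j, `|v 0 j| <= e) -> `|v| <= e.
Proof.
move=> e0 ve; rewrite /Num.Def.normr /= mx_normrE; apply: bigmax_le => // -[i j] _.
by rewrite /= ord1.
Qed.

Lemma linfE v : linf v = `|v|.
Proof.
apply/le_anti/andP; split; first by apply: bigmax_le => // j _; exact: ler_coord_norm.
by apply: rV_norm_le => [|j]; [by apply/bigmax_geP; left | exact: le_bigmax].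
Qed.

Lemma row_sum_le_mxinf H j : \sum_l `|H j l| <= mxinf H.
Proof. exact: le_bigmax. Qed.

Lemma mxinf_ge0 H : 0 <= mxinf H.
Proof. by apply/bigmax_geP; left. Qed.

Lemma ler_norm_row_mul H w j : `|\sum_l H j l * w 0 l| <= mxinf H * `|w|.
Proof.
apply: le_trans (ler_norm_sum _ _ _) _.
apply: le_trans (_ : \sum_l `|H j l| * `|w| <= _).
  by apply: ler_sum => l _; rewrite normrM ler_wpM2l ?ler_coord_norm.
by rewrite -mulr_suml ler_wpM2r ?row_sum_le_mxinf.
Qed.

End LinfNorm.

Section Clamp.
Variable R : realType.
Implicit Types (lo hi x y a b c s e : R).

Lemma ler_dist_max2 x x' y y' e : `|x - x'| <= e -> `|y - y'| <= e ->
  `|Num.max x y - Num.max x' y'| <= e.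
Proof.
rewrite !ler_distl => /andP[? ?] /andP[? ?].
by case: (leP x y) => ?; case: (leP x' y') => ?; apply/andP; split; lra.
Qed.

Lemma ler_dist_min2 x x' y y' e : `|x - x'| <= e -> `|y - y'| <= e ->
  `|Num.min x y - Num.min x' y'| <= e.
Proof.
rewrite !ler_distl => /andP[? ?] /andP[? ?].
by case: (leP x y) => ?; case: (leP x' y') => ?; apply/andP; split; lra.
Qed.

Lemma ler_dist_clamp2 lo lo' hi hi' x x' e :
  `|lo - lo'| <= e -> `|hi - hi'| <= e -> `|x - x'| <= e ->
  `|clamp lo hi x - clamp lo' hi' x'| <= e.
Proof. by move=> ? ? ?; apply: ler_dist_max2 => //; apply: ler_dist_min2. Qed.

Lemma ler_dist_clamp_center a a' s b b' e : `|a - a'| <= e -> `|b - b'| <= e ->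
  `|clamp (a - s) (a + s) b - clamp (a' - s) (a' + s) b'| <= e.
Proof.
move=> aa' bb'; apply: ler_dist_clamp2 => //.
  by have -> : a - s - (a' - s) = a - a' by ring.
by have -> : a + s - (a' + s) = a - a' by ring.
Qed.

Lemma ler_dist_clamp lo hi x y : `|clamp lo hi x - clamp lo hi y| <= `|x - y|.
Proof. by apply: ler_dist_clamp2; rewrite // subrr normr0. Qed.

Lemma clamp_itv lo hi x : lo <= hi -> lo <= clamp lo hi x <= hi.
Proof. by move=> lh; rewrite /clamp le_max lexx ge_max lh ge_min lexx. Qed.

Lemma clamp_id lo hi x : lo <= x <= hi -> clamp lo hi x = x.
Proof. by move=> /andP[lx xh]; rewrite /clamp min_r // max_r. Qed.

Lemma clampE lo hi x : lo <= hi ->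
  clamp lo hi x = if x < lo then lo else if hi < x then hi else x.
Proof.
move=> lh; case: ltP => [xl|lx]; first by rewrite /clamp max_l // ge_min (ltW xl) orbT.
case: ltP => [hx|xh]; last by rewrite clamp_id // lx xh.
by rewrite /clamp min_l ?ltW // max_r // ltW // (le_lt_trans lh).
Qed.

Lemma subr_mul_clamp c e a s b : 0 <= e -> 0 <= s ->
  c - e * clamp (a - s) (a + s) b
  = clamp ((c - e * a) - e * s) ((c - e * a) + e * s) (c - e * b).
Proof.
move=> e0 s0; rewrite !clampE; [|nra|lra].
by do !case: ltP => ?; nra.
Qed.

Lemma sqr_clamp_lt lo hi x p : lo <= p <= hi -> p != clamp lo hi x ->
  (x - clamp lo hi x) ^+ 2 < (x - p) ^+ 2.
Proof.
move=> /andP[lp ph]; rewrite clampE; last lra.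
case: (ltP x lo) => [xl|lx] np.
  have : lo < p by rewrite lt_neqAle eq_sym np lp.
  nra.
case: (ltP hi x) => [hx|xh] in np *.
  have : p < hi by rewrite lt_neqAle np ph.
  nra.
by rewrite subrr expr0n /= exprn_even_gt0 //= subr_eq0 eq_sym.
Qed.

End Clamp.

Lemma in_linf_ballE (R : realType) d (c x : 'rV[R]_d) (r : R) :
  in_linf_ball c r x = (`|x - c| <= r).
Proof. by rewrite /in_linf_ball linfE. Qed.

Lemma in_linf_ballP (R : realType) d (c x : 'rV[R]_d) (r : R) : 0 <= r ->
  in_linf_ball c r x <-> forall j, c 0 j - r <= x 0 j <= c 0 j + r.
Proof.
rewrite in_linf_ballE => r0; split => [xr j|xr].
  by rewrite -ler_distl; apply: le_trans xr; exact: ler_coord_dist.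
by apply: rV_norm_le => // j; rewrite !mxE ler_distl.
Qed.

Section EuclidProjBall.
Variables (R : realType) (d : nat) (c : 'rV[R]_d) (r : R) (Pi : 'rV[R]_d -> 'rV[R]_d).
Hypotheses (r0 : 0 <= r) (hPi : is_euclid_proj_ball c r Pi).

Lemma euclid_proj_ballE y j : Pi y 0 j = clamp (c 0 j - r) (c 0 j + r) (y 0 j).
Proof.
have [/(in_linf_ballP _ _ r0) Pin Pmin] := hPi y.
have /(clamp_itv (y 0 j)) qin : c 0 j - r <= c 0 j + r.
  by rewrite lerD2l (le_trans _ r0) ?oppr_le0.
set q := clamp _ _ _ in qin *.
have [//|Pq] := eqVneq (Pi y 0 j) q.
pose x : 'rV[R]_d := Pi y + (q - Pi y 0 j) *: delta_mx 0 j.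
have xE l : x 0 l = if l == j then q else Pi y 0 l.
  rewrite !mxE eqxx /=; case: (eqVneq l j) => [->|_] /=; rewrite ?mulr1n ?mulr0n.
    by rewrite mulr1 addrC subrK.
  by rewrite mulr0 addr0.
have xin : in_linf_ball c r x by apply/in_linf_ballP => // l; rewrite xE; case: eqP => [->|].
have := Pmin x xin.
rewrite /sqdist2 (bigD1 j) //= [leRHS](bigD1 j) //= xE eqxx.
under [X in _ <= _ + X]eq_bigr => l /negbTE lj do rewrite xE lj.
by have := sqr_clamp_lt (Pin j) Pq; rewrite -/q; lra.
Qed.

Lemma euclid_proj_ball_lip x y : `|Pi x - Pi y| <= `|x - y|.
Proof.
apply: rV_norm_le => // j; rewrite !mxE !euclid_proj_ballE.
exact: le_trans (ler_dist_clamp _ _ _ _) (ler_coord_dist _ _ _).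
Qed.

End EuclidProjBall.

Section Differentiation.
Variable R : realType.
Local Open Scope classical_set_scope.

Lemma diff_quotient_cvg (V W : normedModType R) (G : V -> W) p v :
  differentiable G p ->
  (fun h : R => h^-1 *: (G (h *: v + p) - G p)) @ 0^' --> 'd G p v.
Proof.
move=> dG; have := @diff_derivable _ _ _ G p v dG.
by rewrite /derivable -(deriveE v dG) /derive.
Qed.

Variable d : nat.
Implicit Types (x y p v : 'rV[R]_d).

Lemma sum_mul_scale_delta (a : 'I_d -> R) h j :
  \sum_l a l * (h *: delta_mx 0 j : 'rV[R]_d) 0 l = a j * h.
Proof.
rewrite (bigD1 j) //= big1 => [|l /negbTE lj]; rewrite !mxE ?eqxx /=.
  by rewrite mulr1 addr0.
by rewrite lj mulr0 mulr0.
Qed.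

Lemma hessian_coord_cvg (G : 'rV[R]_d -> 'rV[R]_d) Hs p v j : is_hessian G Hs ->
  (fun h : R => h^-1 * (G (h *: v + p) 0 j - G p 0 j)) @ 0^'
    --> \sum_l Hs p j l * v 0 l.
Proof.
move=> /(_ p)[dG dGv].
have := cvg_comp _ _ (diff_quotient_cvg (v := v) dG) (@coord_continuous _ _ _ 0 j _).
rewrite dGv !mxE; under eq_bigr do rewrite !mxE.
by apply: cvg_trans; apply: near_eq_cvg; near=> h; rewrite /= !mxE.
Unshelve. all: by end_near.
Qed.

Section Convex.
Variables (F : 'rV[R]_d -> R^o) (G : 'rV[R]_d -> 'rV[R]_d).
Hypotheses (cF : convex_fun F) (gF : is_gradient F G).

Lemma convex_gradient_le p v : \sum_j G p 0 j * v 0 j <= F (p + v) - F p.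
Proof.
have [dF <-] := gF p.
apply: cvgr_to_le (cvg_dnbhs_at_right (diff_quotient_cvg (v := v) dF)) _.
near=> h.
have h0 : 0 < h by near: h; exact: nbhs_right_gt.
have h1 : h < 1 by near: h; exact: nbhs_right_lt.
have := @cF (p + v) p h; rewrite (ltW h0) (ltW h1) => /(_ isT).
have -> : h *: (p + v) + (1 - h) *: p = h *: v + p.
  by rewrite scalerDr scalerBl scale1r addrC addrA addrNK addrC.
by move=> Fh; rewrite /= ler_pdivrMl //; lra.
Unshelve. all: by end_near.
Qed.

Lemma convex_gradient_monotone x y : 0 <= \sum_j (G x - G y) 0 j * (x - y) 0 j.
Proof.
have := convex_gradient_le y (x - y); have := convex_gradient_le x (y - x).
rewrite !subrKC.
have -> : \sum_j (G x - G y) 0 j * (x - y) 0 j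
    = - \sum_j G x 0 j * (y - x) 0 j - \sum_j G y 0 j * (x - y) 0 j.
  by rewrite -sumrN -sumrB; apply: eq_bigr => j _; rewrite !mxE; ring.
lra.
Qed.

Lemma hessian_diag_ge0 Hs p j : is_hessian G Hs -> 0 <= Hs p j j.
Proof.
move=> hG; set e : 'rV[R]_d := delta_mx 0 j.
have Hq := hessian_coord_cvg (p := p) (v := e) (j := j) hG.
have ejj : \sum_l Hs p j l * e 0 l = Hs p j j by rewrite -[e]scale1r sum_mul_scale_delta mulr1.
rewrite ejj in Hq.
apply: (cvgr_to_ge Hq).
near=> h.
have h0 : h != 0 by near: h; exact: nbhs_dnbhs_neq.
have := convex_gradient_monotone (h *: e + p) p.
rewrite addrK sum_mul_scale_delta !mxE => mon.
have -> : h^-1 * (G (h *: e + p) 0 j - G p 0 j)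
    = h^-1 ^+ 2 * ((G (h *: e + p) 0 j - G p 0 j) * h).
  by rewrite expr2 -mulrA [_ * h]mulrC mulKf.
by rewrite mulr_ge0 ?sqr_ge0.
Unshelve. all: by end_near.
Qed.

End Convex.

Lemma hessian_mvt (G : 'rV[R]_d -> 'rV[R]_d) Hs x y j : is_hessian G Hs ->
  exists p, (G x - G y) 0 j = \sum_l Hs p j l * (x - y) 0 l.
Proof.
move=> hG; set v := x - y.
pose phi (s : R) := G (s *: v + y) 0 j.
pose dphi (s : R) := \sum_l Hs (s *: v + y) j l * v 0 l.
have Dphi s : is_derive s (1 : R) phi (dphi s).
  have Hq := hessian_coord_cvg (p := s *: v + y) (v := v) (j := j) hG.
  have quotE : (fun h : R => h^-1 *: ((phi \o shift s) (h *: 1) - phi s)) =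
      (fun h => h^-1 * (G (h *: v + (s *: v + y)) 0 j - G (s *: v + y) 0 j)).
    by apply: funext => h; rewrite /phi /= [_%:A]mulr1 scalerDl addrA.
  apply: DeriveDef; first by apply/cvg_ex; exists (dphi s); rewrite quotE.
  by rewrite /derive quotE (cvg_lim _ Hq).
have [c _ MVT] := MVT_segment ler01 (fun s _ => Dphi s)
  (derivable_within_continuous (fun s _ => @ex_derive _ _ _ _ _ _ _ (Dphi s))).
exists (c *: v + y); move: MVT.
by rewrite /phi /dphi scale1r scale0r add0r subr0 mulr1 /v subrK !mxE.
Qed.

End Differentiation.

Section Mean.
Variables (R : realType) (d B : nat).
Implicit Types (X Y : 'I_B -> 'rV[R]_d).

Lemma meanB X Y : mean X - mean Y = mean (fun i => X i - Y i).
Proof. by rewrite /mean -scalerBr sumrB. Qed.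

Lemma norm_mean_le X (e : R) : 0 <= e -> (forall i, `|X i| <= e) -> `|mean X| <= e.
Proof.
move=> e0 Xe; rewrite /mean normrZ.
have [B0|B0] := posnP B; first by rewrite [in B%:R]B0 invr0 normr0 mul0r.
rewrite ger0_norm ?invr_ge0 // ler_pdivrMl ?ltr0n //.
apply: le_trans (ler_norm_sum _ _ _) _.
by apply: le_trans (ler_sum _ (fun i _ => Xe i)) _; rewrite sumr_const card_ord mulr_natl.
Qed.

Lemma mean_affine X (a : R) (b : 'rV[R]_d) : (0 < B)%N ->
  mean (fun i => a *: X i + b) = a *: mean X + b.
Proof.
move=> B0; rewrite /mean big_split /= sumr_const card_ord -scaler_sumr scalerDr.
congr (_ + _); first by rewrite !scalerA mulrC.
by rewrite -[b *+ B]scaler_nat scalerA mulVf ?scale1r // pnatr_eq0 -lt0n.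
Qed.

End Mean.

Lemma diag_dominant_row_step (R : realType) d (H : 'M[R]_d) (w : 'rV[R]_d) j eta :
  0 <= H j j -> diag_dominant H -> 0 <= eta -> eta * mxinf H <= 1 ->
  `|w 0 j - eta * \sum_l H j l * w 0 l| <= `|w|.
Proof.
move=> Hjj0 dd eta0 etaH.
rewrite (bigD1 j) //=; set S := \sum_(l | l != j) _.
have S_le : `|S| <= H j j * `|w|.
  apply: le_trans (ler_norm_sum _ _ _) _.
  apply: le_trans (_ : \sum_(l | l != j) `|H j l| * `|w| <= _).
    by apply: ler_sum => l _; rewrite normrM ler_wpM2l ?ler_coord_norm.
  by rewrite -mulr_suml ler_wpM2r // -(ger0_norm Hjj0) dd.
have etaHjj : eta * H j j <= 1.
  apply: le_trans etaH; rewrite ler_wpM2l // (le_trans _ (row_sum_le_mxinf H j)) //.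
  by rewrite (bigD1 j) //= ger0_norm // lerDl sumr_ge0.
have := ler_coord_norm w j; have := normr_ge0 w.
have -> : w 0 j - eta * (H j j * w 0 j + S) = (1 - eta * H j j) * w 0 j - eta * S by ring.
move=> w0 wj; apply: le_trans (ler_normB _ _) _.
rewrite !normrM (ger0_norm eta0) ger0_norm ?subr_ge0 //.
have : (1 - eta * H j j) * `|w 0 j| <= (1 - eta * H j j) * `|w|.
  by rewrite ler_wpM2l ?subr_ge0.
have : eta * `|S| <= eta * (H j j * `|w|) by rewrite ler_wpM2l.
nra.
Qed.

Section SmoothConvex.
Variables (R : realType) (d : nat) (F : 'rV[R]_d -> R^o) (G : 'rV[R]_d -> 'rV[R]_d).
Variables (Hs : 'rV[R]_d -> 'M[R]_d) (beta : R).
Hypotheses (cF : convex_fun F) (gF : is_gradient F G) (hG : is_hessian G Hs).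
Hypotheses (Hs_le : forall p, mxinf (Hs p) <= beta) (Hs_dd : forall p, diag_dominant (Hs p)).

Lemma gradient_lip (x y : 'rV[R]_d) : `|G x - G y| <= beta * `|x - y|.
Proof.
have beta0 : 0 <= beta := le_trans (mxinf_ge0 _) (Hs_le x).
apply: rV_norm_le => [|j]; first exact: mulr_ge0.
have [p ->] := hessian_mvt x y j hG.
exact: le_trans (ler_norm_row_mul _ _ _) (ler_wpM2r (normr_ge0 _) (Hs_le p)).
Qed.

Lemma gradient_step_nonexpansive (eta : R) (x y : 'rV[R]_d) : 0 <= eta -> eta * beta <= 1 ->
  `|(x - y) - eta *: (G x - G y)| <= `|x - y|.
Proof.
move=> eta0 etabeta; apply: rV_norm_le => // j.
have [p Ej] := hessian_mvt x y j hG.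
have -> : ((x - y) - eta *: (G x - G y)) 0 j = (x - y) 0 j - eta * (G x - G y) 0 j.
  by rewrite !mxE.
rewrite Ej.
apply: diag_dominant_row_step => //; first exact: (hessian_diag_ge0 cF gF p j hG).
by apply: le_trans etabeta; rewrite ler_wpM2l.
Qed.

End SmoothConvex.

Section UserGradients.
Variables (R : realType) (d m : nat) (Zt : Type) (gradf : Zt -> 'rV[R]_d -> 'rV[R]_d).
Implicit Types (U : 'I_m -> Zt) (x y : 'rV[R]_d).

Lemma qgradB U x y :
  qgrad gradf U x - qgrad gradf U y = mean (fun k => gradf (U k) x - gradf (U k) y).
Proof. exact: meanB. Qed.

Lemma qgrad_lip (beta : R) U x y : 0 <= beta ->
  (forall z, `|gradf z x - gradf z y| <= beta * `|x - y|) ->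
  `|qgrad gradf U x - qgrad gradf U y| <= beta * `|x - y|.
Proof. by move=> beta0 glip; rewrite qgradB norm_mean_le ?mulr_ge0. Qed.

Lemma qgrad_step_nonexpansive (eta : R) U x y :
  (forall z, `|(x - y) - eta *: (gradf z x - gradf z y)| <= `|x - y|) ->
  `|(x - y) - eta *: (qgrad gradf U x - qgrad gradf U y)| <= `|x - y|.
Proof.
move=> gstep; rewrite qgradB.
have [m0|m0] := posnP m.
  by rewrite /mean [in m%:R]m0 invr0 scale0r scaler0 subr0.
rewrite -[_ - eta *: _]addrC -scaleNr -mean_affine //.
by apply: norm_mean_le => // k; rewrite scaleNr addrC.
Qed.

End UserGradients.

Section RobustEstimator.
Variables (R : realType) (d B : nat) (rs : ('I_B -> 'rV[R]_d) -> 'rV[R]_d).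
Implicit Types (X Y : 'I_B -> 'rV[R]_d) (x y : 'rV[R]_d).

Lemma robust_estE X (vs : R) j : 0 <= vs ->
  robust_est rs X vs 0 j = clamp (rs X 0 j - vs) (rs X 0 j + vs) (mean X 0 j).
Proof.
move=> vs0; rewrite mxE /=; case: leP => // /ltW near.
by rewrite clamp_id // -ler_distlC.
Qed.

Lemma robust_est_near X (vs : R) : 0 <= vs -> `|robust_est rs X vs - rs X| <= vs.
Proof.
move=> vs0; rewrite -in_linf_ballE; apply/in_linf_ballP => // j.
by rewrite robust_estE // clamp_itv // lerD2l (le_trans _ vs0) ?oppr_le0.
Qed.

Hypothesis hrs : robust_stat rs.

Lemma robust_update_coord (eta vs : R) X x j : (0 < B)%N -> 0 <= eta -> 0 <= vs ->
  (x - eta *: robust_est rs X vs) 0 j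
  = let X' := fun i => x - eta *: X i in
    clamp (rs X' 0 j - eta * vs) (rs X' 0 j + eta * vs) (mean X' 0 j).
Proof.
move=> B0 eta0 vs0 /=; have [_ _ rs_affine] := hrs.
have -> : (fun i => x - eta *: X i) = (fun i => (- eta) *: X i + x).
  by apply: funext => i; rewrite scaleNr addrC.
have -> : (x - eta *: robust_est rs X vs) 0 j = x 0 j - eta * robust_est rs X vs 0 j.
  by rewrite !mxE.
rewrite robust_estE // rs_affine mean_affine // !mxE subr_mul_clamp //.
by rewrite !mulNr ![_ + x 0 j]addrC.
Qed.

Lemma robust_update_lip (eta vs : R) X Y x y (e : R) : (0 < B)%N -> 0 <= eta -> 0 <= vs ->
  (forall i, `|(x - eta *: X i) - (y - eta *: Y i)| <= e) ->
  `|(x - eta *: robust_est rs X vs) - (y - eta *: robust_est rs Y vs)| <= e.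
Proof.
move=> B0 eta0 vs0 XYe; have [_ rs_lip _] := hrs.
have e0 : 0 <= e := le_trans (normr_ge0 _) (XYe (Ordinal B0)).
apply: rV_norm_le => // j; rewrite coordB !robust_update_coord //=.
apply: ler_dist_clamp_center; apply: le_trans (ler_coord_dist _ _ _) _.
  by rewrite -linfE; apply: rs_lip => i; rewrite linfE distrC.
by rewrite meanB norm_mean_le.
Qed.

Lemma robust_est_dist_shared_center X Y cX cY q (rho : R) : 0 <= rho ->
  (B < 2 * #|[set i | `[< in_linf_ball cX rho (X i) >]]|)%N ->
  (B < 2 * #|[set i | `[< in_linf_ball cY rho (Y i) >]]|)%N ->
  in_linf_ball cX rho q -> in_linf_ball cY rho q ->
  `|robust_est rs X rho - robust_est rs Y rho| <= 6 * rho.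
Proof.
have [rs_maj _ _] := hrs.
move=> rho0 /rs_maj + /rs_maj; rewrite !in_linf_ballE => rsX rsY qX qY.
have REX := robust_est_near X rho0; have REY := robust_est_near Y rho0.
have := ler_distD (rs X) (robust_est rs X rho) (robust_est rs Y rho).
have := ler_distD cX (rs X) (robust_est rs Y rho).
have := ler_distD q cX (robust_est rs Y rho).
have := ler_distD cY q (robust_est rs Y rho).
have := ler_distD (rs Y) cY (robust_est rs Y rho).
rewrite distrC in qX; rewrite distrC in rsY; rewrite distrC in REY.
lra.
Qed.

End RobustEstimator.

Lemma aligned_common_index n (A1 A2 : {set 'I_n}) (k : 'I_n) : (3 < n)%N ->
  (2 * n <= 3 * #|A1|)%N -> (2 * n <= 3 * #|A2|)%N ->
  exists2 i, i != k & i \in A1 :&: A2.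
Proof.
move=> n3 A1big A2big.
have UI := cardsUI A1 A2.
have U_le : (#|A1 :|: A2| <= n)%N by rewrite -[n in (_ <= n)%N]card_ord max_card.
have : (0 < #|A1 :&: A2| - (k \in A1 :&: A2))%N by case: (k \in _); lia.
rewrite (cardsD1 k) addKn => /card_gt0P[i].
by rewrite in_setD1 => /andP[ik iA]; exists i.
Qed.

Section Trajectory.
Variables (R : realType) (d B m : nat) (Zt : Type) (gradf : Zt -> 'rV[R]_d -> 'rV[R]_d).
Variables (rs : ('I_B -> 'rV[R]_d) -> 'rV[R]_d) (c : 'rV[R]_d) (r : R).
Variables (Pi : 'rV[R]_d -> 'rV[R]_d) (eta vs : R) (x0 : 'rV[R]_d).
Hypotheses (r0 : 0 <= r) (hPi : is_euclid_proj_ball c r Pi).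
Hypotheses (eta0 : 0 <= eta) (vs0 : 0 <= vs).
Implicit Types D : nat -> 'I_B -> 'I_m -> Zt.
Local Notation traj := (sgd_traj gradf rs Pi eta vs x0).

Lemma sgd_traj1_dist D1 D2 : `|traj D1 1 - traj D2 1| <=
  eta * `|robust_est rs (fun i => qgrad gradf (D1 1%N i) x0) vs
          - robust_est rs (fun i => qgrad gradf (D2 1%N i) x0) vs|.
Proof.
apply: le_trans (euclid_proj_ball_lip r0 hPi _ _) _.
by rewrite subrACA subrr sub0r -scalerBr normrN normrZ ger0_norm.
Qed.

Hypothesis hrs : robust_stat rs.

Lemma sgd_traj1_dist_aligned D1 D2 k : (3 < B)%N ->
  (forall i, i != k -> D2 1%N i = D1 1%N i) -> aligned gradf x0 D1 D2 vs ->
  `|traj D1 1 - traj D2 1| <= eta * (6 * vs).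
Proof.
move=> B3 D12 [cX [cY [A1big A2big]]].
have [i0 i0k] := aligned_common_index k B3 A1big A2big.
rewrite !inE => /andP[/asboolP qX /asboolP]; rewrite D12 // => qY.
have majority (A : {set 'I_B}) : (2 * B <= 3 * #|A|)%N -> (B < 2 * #|A|)%N by lia.
have RE_dist := robust_est_dist_shared_center hrs vs0 (majority _ A1big) (majority _ A2big) qX qY.
exact: le_trans (sgd_traj1_dist D1 D2) (ler_wpM2l eta0 RE_dist).
Qed.

Hypothesis B0 : (0 < B)%N.
Hypothesis gstep : forall z x y, `|(x - y) - eta *: (gradf z x - gradf z y)| <= `|x - y|.

Lemma sgd_traj_step_nonexpansive D1 D2 t : D1 t.+1 = D2 t.+1 ->
  `|traj D1 t.+1 - traj D2 t.+1| <= `|traj D1 t - traj D2 t|.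
Proof.
move=> /= ->; apply: le_trans (euclid_proj_ball_lip r0 hPi _ _) _.
apply: robust_update_lip => // i.
by rewrite subrACA -scalerBr qgrad_step_nonexpansive.
Qed.

Lemma sgd_traj_dist_le D1 D2 n : (forall t, (1 < t)%N -> D1 t = D2 t) ->
  `|traj D1 n.+1 - traj D2 n.+1| <= `|traj D1 1 - traj D2 1|.
Proof.
move=> D12; elim: n => // n IH; apply: le_trans IH.
exact: sgd_traj_step_nonexpansive (D12 _ _).
Qed.

End Trajectory.

Lemma ler_dist_expRN (R : realType) (u v : R) : 0 <= u -> 0 <= v ->
  `|expR (- u) - expR (- v)| <= `|u - v|.
Proof.
wlog uv : u v / u <= v.
  move=> wlog_uv u0 v0; have [uv|/ltW vu] := leP u v; first exact: wlog_uv.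
  by rewrite distrC [`|u - v|]distrC wlog_uv.
move=> u0 v0.
have splitv : expR (- v) = expR (- u) * expR (- (v - u)) by rewrite -expRD opprB addKr.
have := expR_ge1Dx (- (v - u)); have := expR_ge0 (- (v - u)).
have : expR (- u) <= 1 by rewrite expR_le1 oppr_le0.
have := expR_ge0 (- u).
rewrite splitv ger0_norm ?subr_ge0; last by rewrite ler_piMr // expR_le1 oppr_le0 subr_ge0.
rewrite ler0_norm ?subr_le0 //; nra.
Qed.

Section KernelAverage.
Variables (R : realType) (B : nat).
Implicit Types (E : 'I_B -> 'I_B -> R).

Definition kernel_avg E : R := B%:R^-1 * \sum_i \sum_j E i j.

Lemma kernel_avg_itv E : (0 < B)%N ->
  (forall i j, 0 <= E i j <= 1) -> (forall i, E i i = 1) -> 1 <= kernel_avg E <= B%:R.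
Proof.
move=> B0 E01 E1.
have lo : B%:R <= \sum_i \sum_j E i j.
  rewrite -[leLHS]mulr1 mulr_natl -[X in 1 *+ X]card_ord -sumr_const.
  apply: ler_sum => i _; rewrite (bigD1 i) //= E1 lerDl.
  by apply: sumr_ge0 => j _; case/andP: (E01 i j).
have hi : \sum_i \sum_j E i j <= B%:R * B%:R.
  have -> : B%:R * B%:R = \sum_(i < B) \sum_(j < B) (1 : R).
    by rewrite !sumr_const !card_ord mulr_natl.
  by apply: ler_sum => i _; apply: ler_sum => j _; case/andP: (E01 i j).
by rewrite /kernel_avg ler_pdivlMl ?ler_pdivrMl ?ltr0n // mulr1 lo hi.
Qed.

Lemma dist_kernel_avg_le E1 E2 (K : R) : (forall i j, `|E1 i j - E2 i j| <= K) ->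
  `|kernel_avg E1 - kernel_avg E2| <= B%:R * K.
Proof.
move=> E12; have [B0|B0] := posnP B.
  by rewrite /kernel_avg [in B%:R]B0 invr0 !mul0r subrr normr0.
rewrite /kernel_avg -mulrBr normrM ger0_norm ?invr_ge0 // ler_pdivrMl ?ltr0n //.
have -> : B%:R * (B%:R * K) = \sum_(i < B) \sum_(j < B) K.
  by rewrite !sumr_const !card_ord !mulr_natl.
rewrite -sumrB; apply: le_trans (ler_norm_sum _ _ _) _; apply: ler_sum => i _.
by rewrite -sumrB; apply: le_trans (ler_norm_sum _ _ _) _; apply: ler_sum.
Qed.

Lemma dist_kernel_avg_small E1 E2 : (B <= 3)%N ->
  (forall i j, 0 <= E1 i j <= 1) -> (forall i, E1 i i = 1) ->
  (forall i j, 0 <= E2 i j <= 1) -> (forall i, E2 i i = 1) ->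
  `|kernel_avg E1 - kernel_avg E2| <= 2.
Proof.
move=> B3 E1_01 E1_diag E2_01 E2_diag; have [B0|B0] := posnP B.
  by rewrite /kernel_avg [in B%:R]B0 invr0 !mul0r subrr normr0.
have /andP[? ?] := kernel_avg_itv B0 E1_01 E1_diag.
have /andP[? ?] := kernel_avg_itv B0 E2_01 E2_diag.
have : (B%:R : R) <= 3 by rewrite (ler_nat _ B 3).
by rewrite ler_norml; move=> ?; apply/andP; split; lra.
Qed.

End KernelAverage.

Section ExpKernel.
Variables (R : realType) (d B : nat) (tau : R).
Hypothesis tau0 : 0 <= tau.
Implicit Types Q : 'I_B -> 'rV[R]_d.

Definition exp_kernel Q i j : R := expR (- (tau * `|Q i - Q j|)).

Lemma exp_kernel_itv Q i j : 0 <= exp_kernel Q i j <= 1.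
Proof. by rewrite expR_ge0 expR_le1 oppr_le0 mulr_ge0. Qed.

Lemma exp_kernel_diag Q i : exp_kernel Q i i = 1.
Proof. by rewrite /exp_kernel subrr normr0 mulr0 oppr0 expR0. Qed.

Lemma dist_exp_kernel_le Q1 Q2 (delta : R) i j : (forall i, `|Q1 i - Q2 i| <= delta) ->
  `|exp_kernel Q1 i j - exp_kernel Q2 i j| <= tau * (2 * delta).
Proof.
move=> Q12; apply: le_trans (ler_dist_expRN _ _) _; rewrite ?mulr_ge0 //.
rewrite -mulrBr normrM ger0_norm // ler_wpM2l //.
apply: le_trans (ler_dist_dist _ _) _; rewrite subrACA mulr_natl mulr2n.
exact: le_trans (ler_normB _ _) (lerD (Q12 i) (Q12 j)).
Qed.

End ExpKernel.

Section SimilarityScore.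
Variables (R : realType) (d B m : nat) (Zt : Type) (gradf : Zt -> 'rV[R]_d -> 'rV[R]_d).
Variables (rs : ('I_B -> 'rV[R]_d) -> 'rV[R]_d) (Pi : 'rV[R]_d -> 'rV[R]_d).
Variables (eta vs : R) (x0 : 'rV[R]_d) (tau : R).
Hypothesis tau0 : 0 <= tau.
Implicit Types D : nat -> 'I_B -> 'I_m -> Zt.
Local Notation traj := (sgd_traj gradf rs Pi eta vs x0).
Local Notation s D t := (s_stat gradf rs Pi eta vs x0 D tau t).

Lemma s_statE D t :
  s D t = kernel_avg (exp_kernel tau (fun i => qgrad gradf (D t i) (traj D t.-1))).
Proof.
rewrite /s_stat /kernel_avg; congr (_ * _).
by apply: eq_bigr => i _; apply: eq_bigr => j _; rewrite linfE.
Qed.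

Lemma dist_s_stat_small D1 D2 t : (B <= 3)%N -> `|s D1 t - s D2 t| <= 2.
Proof.
move=> B3; rewrite !s_statE.
by apply: dist_kernel_avg_small => // *; rewrite ?exp_kernel_diag ?exp_kernel_itv.
Qed.

Lemma dist_s_stat_le (beta delta : R) D1 D2 t : 0 <= beta ->
  (forall z x y, `|gradf z x - gradf z y| <= beta * `|x - y|) ->
  D1 t = D2 t -> `|traj D1 t.-1 - traj D2 t.-1| <= delta ->
  `|s D1 t - s D2 t| <= B%:R * (tau * (2 * (beta * delta))).
Proof.
move=> beta0 glip D12 xy; rewrite !s_statE D12.
apply: dist_kernel_avg_le => i j; apply: dist_exp_kernel_le => // i'.
exact: le_trans (qgrad_lip _ beta0 (fun z => glip z _ _)) (ler_wpM2l beta0 xy).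
Qed.

End SimilarityScore.

Theorem lemma3p9 (R : realType) (d B m T : nat) (Zt : Type)
  (f : Zt -> 'rV[R]_d -> R) (gradf : Zt -> 'rV[R]_d -> 'rV[R]_d)
  (hessf : Zt -> 'rV[R]_d -> 'M[R]_d) (beta : R)
  (c : 'rV[R]_d) (r : R) (Pi : 'rV[R]_d -> 'rV[R]_d)
  (phi : ('I_B -> R) -> R) (eta tau : R) (x0 : 'rV[R]_d)
  (D1 D2 : nat -> 'I_B -> 'I_m -> Zt) (k : 'I_B) :
  0 <= r ->
  is_euclid_proj_ball c r Pi ->
  (forall z, convex_fun (f z)) ->
  (forall z, is_gradient (f z) (gradf z)) ->
  (forall z, is_hessian (gradf z) (hessf z)) ->
  (forall z x, mxinf (hessf z x) <= beta) ->
  (forall z x, diag_dominant (hessf z x)) ->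
  robust_stat (@coord_map R d B phi) ->
  0 < eta -> 0 < tau ->
  6 * beta * eta * B%:R <= 1 ->
  (forall (t : nat) (i : 'I_B), (t, i) <> (1%N, k) -> D2 t i = D1 t i) ->
  aligned gradf x0 D1 D2 (1 / tau) ->
  forall t : nat, (2 <= t <= T)%N ->
    `| s_stat gradf (@coord_map R d B phi) Pi eta (1 / tau) x0 D1 tau t
       - s_stat gradf (@coord_map R d B phi) Pi eta (1 / tau) x0 D2 tau t | <= 2.
Proof.
move=> r0 hPi cvx grad hess Hs_le Hs_dd hrs eta0 tau0 hbeta D12 aligned12 t /andP[t2 _].
have tau0' := ltW tau0.
have [B3|B4] := leqP B 3; first by apply: dist_s_stat_small.
have B0 : (0 < B)%N by apply: leq_trans B4.
have rho0 : 0 <= 1 / tau by rewrite divr_ge0.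
(* with [Zt] empty the Hessian bound says nothing about the sign of [beta] *)
pose bp := Num.max beta 0.
have [bp0 beta_bp] : 0 <= bp /\ beta <= bp by rewrite /bp !le_max !lexx orbT.
have Hs_bp z p : mxinf (hessf z p) <= bp := le_trans (Hs_le z p) beta_bp.
have bp_le : 6 * bp * eta * B%:R <= 1.
  by rewrite /bp; case: (leP 0 beta) => // _; rewrite mulr0 !mul0r.
have eta_bp : eta * bp <= 1.
  have : 0 <= eta * bp by apply: mulr_ge0 => //; exact: ltW.
  have : (1 : R) <= B%:R by rewrite (ler_nat _ 1 B).
  nra.
have gstep z x y :=
  gradient_step_nonexpansive (cvx z) (grad z) (hess z) (Hs_bp z) (Hs_dd z) x y (ltW eta0) eta_bp.
have glip z := gradient_lip (hess z) (Hs_bp z).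
have D12_first i : i != k -> D2 1%N i = D1 1%N i.
  by move=> ik; apply: D12 => -[iE]; rewrite iE eqxx in ik.
have D12_later s : (1 < s)%N -> D1 s = D2 s.
  by move=> s1; apply/esym/funext => i; apply: D12 => -[s1E]; rewrite s1E in s1.
have dist1 := sgd_traj1_dist_aligned r0 hPi (ltW eta0) rho0 hrs B4 D12_first aligned12.
have [n ->] : exists n, t = n.+2 by exists t.-2; lia.
have distn :=
  le_trans (sgd_traj_dist_le x0 r0 hPi (ltW eta0) rho0 hrs B0 gstep n D12_later) dist1.
have s_dist := dist_s_stat_le tau0' bp0 glip (D12_later n.+2 isT) distn.
apply: le_trans s_dist _.
have -> : B%:R * (tau * (2 * (bp * (eta * (6 * (1 / tau))))))
    = 2 * (6 * bp * eta * B%:R) * (tau / tau) by rewrite mul1r; ring.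
by rewrite mulfV ?gt_eqF // mulr1; lra.
Qed.
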